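(* Let $\Gamma$ be a finite connected $m$-regular graph and let $u$ be an eigenvector of (the adjacency matrix of) $\Gamma$ which takes exactly three distinct values $a_0,a_1,a_2$. For $i\in\{0,1,2\}$ let $C^i$ be the set of vertices $x$ with $u_x=a_i$. Suppose that there are no edges between $C^0$ and $C^2$, and that there is a number $\beta_1$ such that every vertex of $C^1$ is adjacent to exactly $\beta_1$ vertices of $C^2$. Then for all $i,j\in\{0,1,2\}$ the number of neighbours in $C^j$ of a vertex $x\in C^i$ does not depend on the choice of $x\in C^i$; consequently $C^0$ is a completely regular code in $\Gamma$, with distance partition $(C^0,C^1,C^2)$ and covering radius $2$.
   Context: For a nonempty vertex set $C$ of a connected regular graph, $C_i$ denotes the set of vertices at distance exactly $i$ from $C$, and the covering radius $\rho$ is the largest $i$ with $C_i\neq\emptyset$; $(C_0=C,C_1,\dots,C_\rho)$ is the distance partition. $C$ is a completely regular code if there are numbers $\gamma_i,\alpha_i,\beta_i$ such that every vertex of $C_i$ has exactly $\gamma_i$ neighbours in $C_{i-1}$, $\alpha_i$ neighbours in $C_i$ and $\beta_i$ neighbours in $C_{i+1}$, for all $i$. *)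

From mathcomp Require Import all_boot all_order all_algebra.
Set Implicit Arguments. Unset Strict Implicit. Unset Printing Implicit Defensive.
Import Order.TTheory GRing.Theory Num.Theory.

(* A finite simple graph: vertex type T : finType, adjacency e : rel T,
   assumed symmetric and irreflexive in the theorem. *)

Section Graphs.
Variable T : finType.
Variable e : rel T.

Definition nbrs_in (x : T) (S : {set T}) : {set T} := [set y in S | e x y].

Definition regular (m : nat) : Prop := forall x : T, #|[set y | e x y]| = m.

Definition connected_graph : Prop := forall x y : T, connect e x y.

Definition adj_eigenvector (R : nzRingType) (u : T -> R) : Prop :=
  (exists x, u x != 0%R) /\
  exists theta : R, forall x, (\sum_(y | e x y) u y)%R = (theta * u x)%R.

(* ball C k = vertices at distance <= k from C *)
Definition ball (C : {set T}) (k : nat) : {set T} :=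
  iter k (fun S => S :|: [set y | [exists x in S, e x y]]) C.

Definition layer (C : {set T}) (i : nat) : {set T} :=
  if i is i'.+1 then ball C i :\: ball C i' else C.

(* C_{i-1}, with C_{-1} empty *)
Definition prev_layer (C : {set T}) (i : nat) : {set T} :=
  if i is i'.+1 then layer C i' else set0.

Definition covering_radius_is (C : {set T}) (rho : nat) : Prop :=
  layer C rho != set0 /\ forall i, rho < i -> layer C i = set0.

Definition completely_regular (C : {set T}) : Prop :=
  C != set0 /\
  exists rho, covering_radius_is C rho /\
  exists gamma alpha beta : nat -> nat,
    forall i x, i <= rho -> x \in layer C i ->
      [/\ #|nbrs_in x (prev_layer C i)| = gamma i,
          #|nbrs_in x (layer C i)| = alpha i &
          #|nbrs_in x (layer C i.+1)| = beta i].

End Graphs.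

From mathcomp Require Import all_boot all_order all_algebra ring.
Import Order.TTheory GRing.Theory Num.Theory.
Set Implicit Arguments. Unset Strict Implicit. Unset Printing Implicit Defensive.
Local Open Scope ring_scope.

(* Counting the
   neighbours of a vertex x in each C_j gives two linear equations
       n_0 + n_1 + n_2 = m,   n_0 a0 + n_1 a1 + n_2 a2 = theta u(x).
   On C0 and C2 one of the unknowns vanishes (no C0-C2 edges), and on C1 one
   is fixed (= beta1), so the two remaining unknowns are determined by the
   two equations since their coefficients a_i are distinct: the partition
   (C0, C1, C2) is equitable.  Connectivity then forces every vertex of C1
   to have a neighbour in C0 and every vertex of C2 to have a neighbour in
   C1, so (C0, C1, C2) is the distance partition of C0, and an equitable
   distance partition makes C0 completely regular. *)

Lemma nat_solutions_eq (R : numDomainType) (p q : R) (n0 n1 n0' n1' : nat) :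
  p != q -> (n0 + n1 = n0' + n1')%N ->
  n0%:R * p + n1%:R * q = n0'%:R * p + n1'%:R * q ->
  n0 = n0' /\ n1 = n1'.
Proof.
move=> neq_pq sum_eq weighted_eq.
have n1E : n1%:R = n0'%:R + n1'%:R - n0%:R :> R.
  by rewrite -natrD -sum_eq natrD addrC addKr.
have : (n0%:R - n0'%:R) * (p - q) = 0 :> R.
  transitivity ((n0%:R * p + n1%:R * q) - (n0'%:R * p + n1'%:R * q) : R).
    by rewrite n1E; ring.
  by rewrite weighted_eq subrr.
move/eqP; rewrite mulf_eq0 !subr_eq0 eqr_nat (negbTE neq_pq) orbF => /eqP n0E.
by split=> //; move: sum_eq; rewrite n0E => /addnI.
Qed.

Lemma ord3_cases (k : 'I_3) : [\/ k = inord 0, k = inord 1 | k = inord 2].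
Proof.
by case: k => -[|[|[|//]]] lt_k3; [constructor 1|constructor 2|constructor 3];
  apply/val_inj; rewrite /= inordK.
Qed.

Lemma sum_ord3 (M : nmodType) (F : 'I_3 -> M) :
  \sum_(j < 3) F j = F (inord 0) + F (inord 1) + F (inord 2).
Proof.
rewrite !big_ord_recl big_ord0 addr0 addrA.
by congr (F _ + F _ + F _); apply/val_inj; rewrite /= inordK.
Qed.

Section Fibres.
Variables (T I : finType) (V : eqType) (f : T -> V) (a : I -> V).
Hypotheses (a_inj : injective a) (f_vals : forall x, exists i, f x = a i).

Definition fibre (i : I) : {set T} := [set x | f x == a i].

Lemma fibre_cover x : exists i, x \in fibre i.
Proof. by have [i fx] := f_vals x; exists i; rewrite inE fx. Qed.

Lemma fibre_uniq x i j : x \in fibre i -> (x \in fibre j) = (i == j).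
Proof. by rewrite !inE => /eqP ->; rewrite (inj_eq a_inj). Qed.

Lemma fibres_disjoint i j : i != j -> [disjoint fibre i & fibre j].
Proof.
move=> neq_ij; apply/pred0P => x /=; apply/negbTE/andP => -[xi].
by rewrite (fibre_uniq j xi) (negbTE neq_ij).
Qed.

Lemma sum_by_fibres (M : nmodType) (P : pred T) (F : T -> M) :
  \sum_(y | P y) F y = \sum_i \sum_(y | P y && (y \in fibre i)) F y.
Proof.
rewrite (exchange_big_dep P) => [|i y _ /andP[] //]; apply: eq_bigr => y Py.
have [k yk] := fibre_cover y.
by rewrite (big_pred1 k) // => i; rewrite /= Py (fibre_uniq i yk) eq_sym.
Qed.

End Fibres.

Section Neighbours.
Variables (T : finType) (e : rel T).

Lemma card_nbrs_inP x (S : {set T}) :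
  reflect (exists2 y, y \in S & e x y) (0 < #|nbrs_in e x S|)%N.
Proof.
apply: (iffP card_gt0P) => [[y]|[y yS xy]]; last by exists y; rewrite inE yS.
by rewrite inE => /andP[yS xy]; exists y.
Qed.

Lemma card_nbrs_in0 x : #|nbrs_in e x set0| = 0%N.
Proof. by apply/eqP; rewrite cards_eq0; apply/eqP/setP => y; rewrite !inE. Qed.

Lemma card_nbrs_in_sum x (S : {set T}) :
  #|nbrs_in e x S| = (\sum_(y | e x y && (y \in S)) 1)%N.
Proof. by rewrite -sum1_card; apply: eq_bigl => y; rewrite inE andbC. Qed.

Lemma degree_by_fibres (I : finType) (V : eqType) (f : T -> V) (a : I -> V) :
  injective a -> (forall x, exists i, f x = a i) ->
  forall x, #|[set y | e x y]| = (\sum_i #|nbrs_in e x (fibre f a i)|)%N.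
Proof.
move=> a_inj f_vals x; rewrite -sum1_card (eq_bigl (e x)); last first.
  by move=> y; rewrite inE.
rewrite (sum_by_fibres a_inj f_vals); apply: eq_bigr => i _.
by rewrite card_nbrs_in_sum.
Qed.

Lemma adj_sum_by_values (R : nzRingType) (I : finType) (u : T -> R)
    (a : I -> R) :
  injective a -> (forall x, exists i, u x = a i) ->
  forall x, \sum_(y | e x y) u y = \sum_i #|nbrs_in e x (fibre u a i)|%:R * a i.
Proof.
move=> a_inj u_vals x; rewrite (sum_by_fibres a_inj u_vals).
apply: eq_bigr => i _; rewrite card_nbrs_in_sum natr_sum mulr_suml.
by apply: eq_bigr => y /andP[_]; rewrite inE mul1r => /eqP.
Qed.

Hypotheses (e_sym : symmetric e) (e_conn : connected_graph e).

Lemma closed_set_full (S : {set T}) x y :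
  (forall v w, v \in S -> e v w -> w \in S) -> x \in S -> y \in S.
Proof.
move=> S_closed xS.
have S_closedb : closed e (mem S).
  move=> v w vw; apply/idP/idP => [/S_closed|wS]; first exact.
  by apply: (S_closed w); rewrite // e_sym.
by rewrite -(closed_connect S_closedb (e_conn x y)).
Qed.

End Neighbours.

Section DistancePartition.
Variables (T : finType) (e : rel T).

Lemma ballS (C : {set T}) k :
  ball e C k.+1 = ball e C k :|: [set y | [exists x in ball e C k, e x y]].
Proof. by []. Qed.

Lemma layerS (C : {set T}) k : layer e C k.+1 = ball e C k.+1 :\: ball e C k.
Proof. by []. Qed.

Variables D0 D1 D2 : {set T}.
Hypotheses (D_cover : forall y, [\/ y \in D0, y \in D1 | y \in D2])
  (D01 : [disjoint D0 & D1]) (D02 : [disjoint D0 & D2])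
  (D12 : [disjoint D1 & D2]).
Hypotheses (no_edge_02 : forall x y, e x y -> x \in D0 -> y \notin D2)
  (D1_reached : forall y, y \in D1 -> exists2 x, x \in D0 & e x y)
  (D2_reached : forall y, y \in D2 -> exists2 x, x \in D1 & e x y).

Let in_D0 y : y \in D0 -> (y \in D1 = false) * (y \in D2 = false).
Proof.
by move=> yD; split; [apply: disjointFr D01 yD | apply: disjointFr D02 yD].
Qed.

Let in_D1 y : y \in D1 -> (y \in D0 = false) * (y \in D2 = false).
Proof.
by move=> yD; split; [apply: disjointFl D01 yD | apply: disjointFr D12 yD].
Qed.

Let in_D2 y : y \in D2 -> (y \in D0 = false) * (y \in D1 = false).
Proof.
by move=> yD; split; [apply: disjointFl D02 yD | apply: disjointFl D12 yD].
Qed.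

Lemma ball1_partition : ball e D0 1 = D0 :|: D1.
Proof.
apply/setP => y; rewrite ballS !inE.
case: (D_cover y) => yD; first by rewrite yD.
- have [x xD0 xy] := D1_reached yD.
  by rewrite yD (in_D1 yD) orbT; apply/existsP; exists x; rewrite xD0.
- rewrite !(in_D2 yD) /=; apply/negbTE/existsP => -[x /andP[xD0 xy]].
  by move: (no_edge_02 xy xD0); rewrite yD.
Qed.

Lemma ball2_partition : ball e D0 2 = setT.
Proof.
apply/setP => y; rewrite ballS ball1_partition !inE.
case: (D_cover y) => yD; rewrite ?yD ?orbT // !(in_D2 yD) /=.
have [x xD1 xy] := D2_reached yD.
by apply/existsP; exists x; rewrite !inE xD1 orbT.
Qed.

Lemma ball_partition_full k : ball e D0 k.+2 = setT.
Proof.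
by elim: k => [|k IH]; [exact: ball2_partition | rewrite ballS IH setTU].
Qed.

Lemma layer1_partition : layer e D0 1 = D1.
Proof.
apply/setP => y; rewrite layerS ball1_partition !inE.
by case: (D_cover y) => yD; rewrite ?yD ?(in_D0 yD) ?(in_D1 yD) ?(in_D2 yD).
Qed.

Lemma layer2_partition : layer e D0 2 = D2.
Proof.
apply/setP => y; rewrite layerS ball2_partition ball1_partition !inE.
by case: (D_cover y) => yD; rewrite ?yD ?(in_D0 yD) ?(in_D1 yD) ?(in_D2 yD).
Qed.

Lemma layer_partition_beyond k : layer e D0 k.+3 = set0.
Proof. by rewrite layerS !ball_partition_full setDv. Qed.

End DistancePartition.

Lemma completely_regular_of_equitable (T : finType) (e : rel T)
    (C : {set T}) (rho : nat) :
  C != set0 -> covering_radius_is e C rho ->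
  (forall i j x y, (i <= rho)%N -> x \in layer e C i -> y \in layer e C i ->
     #|nbrs_in e x (layer e C j)| = #|nbrs_in e y (layer e C j)|) ->
  completely_regular e C.
Proof.
move=> C_nonempty cov equitable; have /set0Pn[x0 _] := C_nonempty.
split=> //; exists rho; split=> //.
pose rep i := odflt x0 [pick x in layer e C i].
have rep_in i x : x \in layer e C i -> rep i \in layer e C i.
  by rewrite /rep; case: pickP => [//|/(_ x) /= ->].
exists (fun i => #|nbrs_in e (rep i) (prev_layer e C i)|).
exists (fun i => #|nbrs_in e (rep i) (layer e C i)|).
exists (fun i => #|nbrs_in e (rep i) (layer e C i.+1)|).
move=> i x le_i xL; have repL := rep_in i x xL.
split; [|exact: (equitable i)..].
case: i le_i xL repL => [|i] *; first by rewrite /= !card_nbrs_in0.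
exact: (equitable i.+1).
Qed.

Lemma inord3_neq (k l : nat) : (k < 3)%N -> (l < 3)%N -> k != l ->
  (inord k : 'I_3) != inord l.
Proof. by move=> lt_k lt_l; rewrite -(inj_eq val_inj) /= !inordK. Qed.

Section ThreeValuedEigenvector.
Variables (R : realFieldType) (T : finType) (e : rel T) (m : nat).
Hypotheses (e_sym : symmetric e) (e_conn : connected_graph e)
  (e_reg : regular e m).
Variables (u : T -> R) (theta : R) (a : 'I_3 -> R).
Hypotheses (u_eig : forall x, \sum_(y | e x y) u y = theta * u x)
  (a_inj : injective a) (u_vals : forall x, exists i, u x = a i).

Local Notation i0 := (inord 0 : 'I_3).
Local Notation i1 := (inord 1 : 'I_3).
Local Notation i2 := (inord 2 : 'I_3).
Local Notation C := (fibre u a).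
Local Notation n x j := #|nbrs_in e x (C j)|.

Lemma fibre3_cover y : [\/ y \in C i0, y \in C i1 | y \in C i2].
Proof.
have [k yk] := fibre_cover u_vals y.
by case: (ord3_cases k) yk => -> yk;
  [constructor 1 | constructor 2 | constructor 3].
Qed.

Let D01 : [disjoint C i0 & C i1] :=
  fibres_disjoint u a_inj (@inord3_neq 0 1 isT isT isT).
Let D02 : [disjoint C i0 & C i2] :=
  fibres_disjoint u a_inj (@inord3_neq 0 2 isT isT isT).
Let D12 : [disjoint C i1 & C i2] :=
  fibres_disjoint u a_inj (@inord3_neq 1 2 isT isT isT).

Lemma fibre_val i x : x \in C i -> u x = a i.
Proof. by rewrite inE => /eqP. Qed.

Lemma vertex_equations x :
  (n x i0 + n x i1 + n x i2)%N = m /\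
  (n x i0)%:R * a i0 + (n x i1)%:R * a i1 + (n x i2)%:R * a i2 = theta * u x.
Proof.
split; first by rewrite -(e_reg x) (degree_by_fibres e a_inj u_vals) sum_ord3.
by rewrite -u_eig (adj_sum_by_values e a_inj u_vals) sum_ord3.
Qed.

Hypothesis no_edge_02 : forall x y, e x y -> x \in C i0 -> y \notin C i2.
Variable beta1 : nat.
Hypothesis C1_beta : forall x, x \in C i1 -> n x i2 = beta1.

Lemma no_C2_nbrs x : x \in C i0 -> n x i2 = 0%N.
Proof.
move=> xC0; apply/eqP; rewrite -leqn0 leqNgt.
apply/card_nbrs_inP => -[y yC2 xy].
by move: (no_edge_02 xy xC0); rewrite yC2.
Qed.

Lemma no_C0_nbrs x : x \in C i2 -> n x i0 = 0%N.
Proof.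
move=> xC2; apply/eqP; rewrite -leqn0 leqNgt.
apply/card_nbrs_inP => -[y yC0 xy].
by move: (no_edge_02 (etrans (e_sym y x) xy) yC0); rewrite xC2.
Qed.

(* On each level set one count is known, and the other two are then fixed
   by the two vertex equations. *)
Lemma counts_determined i x y : x \in C i -> y \in C i ->
  [/\ n x i0 = n y i0, n x i1 = n y i1 & n x i2 = n y i2].
Proof.
move=> xC yC; have [deg_x eig_x] := vertex_equations x.
have [deg_y eig_y] := vertex_equations y.
rewrite (fibre_val xC) in eig_x; rewrite (fibre_val yC) in eig_y.
have deg_xy := etrans deg_x (esym deg_y).
have eig_xy := etrans eig_x (esym eig_y).
have neq01 : a i0 != a i1 by rewrite (inj_eq a_inj) inord3_neq.
have neq12 : a i1 != a i2 by rewrite (inj_eq a_inj) inord3_neq.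
case: (ord3_cases i) xC yC => -> xC yC.
- rewrite !no_C2_nbrs // !addn0 !mul0r !addr0 in deg_xy eig_xy *.
  by have [-> ->] := nat_solutions_eq neq01 deg_xy eig_xy.
- rewrite !C1_beta // in deg_xy eig_xy *.
  by have [-> ->] := nat_solutions_eq neq01 (addIn deg_xy) (addIr _ eig_xy).
- rewrite !no_C0_nbrs // !add0n !mul0r !add0r in deg_xy eig_xy *.
  by have [-> ->] := nat_solutions_eq neq12 deg_xy eig_xy.
Qed.

Lemma equitable_fibres i j x y : x \in C i -> y \in C i -> n x j = n y j.
Proof.
move=> xC yC; have [eq0 eq1 eq2] := counts_determined xC yC.
by case: (ord3_cases j) => ->.
Qed.

Variable x0 : T.
Hypothesis x0_C0 : x0 \in C i0.

(* Otherwise, by equitability, no vertex of C1 would have a neighbour in C0,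
   so C0 would be closed under adjacency without containing y. *)
Lemma C1_has_C0_nbr y : y \in C i1 -> exists2 x, x \in C i0 & e x y.
Proof.
move=> yC1; suff /card_nbrs_inP[x xC0 yx] : (0 < n y i0)%N.
  by exists x; rewrite // e_sym.
rewrite lt0n; apply/negP => /eqP none.
suff : y \in C i0 by rewrite (disjointFl D01 yC1).
apply: (closed_set_full e_sym e_conn _ _ x0_C0) => v w vC0 vw.
case: (fibre3_cover w) => // wC; last by move: (no_edge_02 vw vC0); rewrite wC.
suff : (0 < n w i0)%N by rewrite (equitable_fibres i0 wC yC1) none.
by apply/card_nbrs_inP; exists v; rewrite // e_sym.
Qed.

(* Otherwise no vertex of C2 would have a neighbour in C1, so C2 would be
   closed under adjacency without containing x0. *)
Lemma C2_has_C1_nbr y : y \in C i2 -> exists2 x, x \in C i1 & e x y.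
Proof.
move=> yC2; suff /card_nbrs_inP[x xC1 yx] : (0 < n y i1)%N.
  by exists x; rewrite // e_sym.
rewrite lt0n; apply/negP => /eqP none.
suff : x0 \in C i2 by rewrite (disjointFr D02 x0_C0).
apply: (closed_set_full e_sym e_conn _ _ yC2) => v w vC2 vw.
case: (fibre3_cover w) => // wC.
  by move: (no_edge_02 (etrans (e_sym w v) vw) wC); rewrite vC2.
suff : (0 < n v i1)%N by rewrite (equitable_fibres i1 vC2 yC2) none.
by apply/card_nbrs_inP; exists w.
Qed.

Lemma layer_fibre_nat j :
  layer e (C i0) j = if (j < 3)%N then C (inord j) else set0.
Proof.
case: j => [|[|[|k]]] //=.
- exact: layer1_partition fibre3_cover D01 D02 D12 no_edge_02 C1_has_C0_nbr.
- exact: layer2_partition fibre3_cover D01 D02 D12 no_edge_02 C1_has_C0_nbr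
    C2_has_C1_nbr.
- exact: layer_partition_beyond fibre3_cover D01 D02 D12 no_edge_02
    C1_has_C0_nbr C2_has_C1_nbr k.
Qed.

Lemma layer_fibre (i : 'I_3) : layer e (C i0) i = C i.
Proof. by rewrite layer_fibre_nat ltn_ord inord_val. Qed.

Variable x2 : T.
Hypothesis x2_C2 : x2 \in C i2.

Lemma covering_radius_fibre : covering_radius_is e (C i0) 2.
Proof.
split; first by apply/set0Pn; exists x2; rewrite layer_fibre_nat.
by move=> [|[|[|k]]] // _; rewrite layer_fibre_nat.
Qed.

Lemma fibre_completely_regular : completely_regular e (C i0).
Proof.
have C0_nonempty : C i0 != set0 by apply/set0Pn; exists x0.
apply: (completely_regular_of_equitable C0_nonempty covering_radius_fibre).
move=> i j x y le_i2; have lt_i3 : (i < 3)%N := le_i2.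
rewrite !layer_fibre_nat lt_i3 => xC yC.
by case: ifP => _; [exact: equitable_fibres xC yC | rewrite !card_nbrs_in0].
Qed.

End ThreeValuedEigenvector.

Theorem theorem3p1 (R : realFieldType) (T : finType) (e : rel T) (m : nat)
  (e_sym : symmetric e) (e_irr : irreflexive e)
  (e_conn : connected_graph e) (e_reg : regular e m)
  (u : T -> R) (u_eig : adj_eigenvector e u)
  (a : 'I_3 -> R) (a_inj : injective a)
  (u_vals : forall x, exists i, u x = a i)
  (a_attained : forall i, exists x, u x = a i) :
  let C := fun i : 'I_3 => [set x | u x == a i] in
  (forall x y, e x y -> x \in C (inord 0) -> y \notin C (inord 2)) ->
  (exists beta1 : nat, forall x, x \in C (inord 1) ->
      #|nbrs_in e x (C (inord 2))| = beta1) ->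
  (forall i j : 'I_3, exists c : nat, forall x, x \in C i ->
      #|nbrs_in e x (C j)| = c) /\
  completely_regular e (C (inord 0)) /\
  (forall i : 'I_3, layer e (C (inord 0)) i = C i) /\
  covering_radius_is e (C (inord 0)) 2.
Proof.
move=> C no_edge_02 [beta1 C1_beta]; have [_ [theta u_eig']] := u_eig.
have in_C i : exists x, x \in C i.
  by have [x ux] := a_attained i; exists x; rewrite inE ux.
have [[x0 x0_C0] [x2 x2_C2]] := (in_C (inord 0), in_C (inord 2)).
have C_fibre : C = fibre u a by [].
rewrite C_fibre in no_edge_02 C1_beta in_C x0_C0 x2_C2 *.
split; [|split; [|split]].
- move=> i j; have [xi xi_C] := in_C i.
  exists #|nbrs_in e xi (fibre u a j)| => x x_C.
  exact: (equitable_fibres e_sym e_reg u_eig' a_inj u_vals no_edge_02 C1_beta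
    j x_C xi_C).
- exact: (fibre_completely_regular e_sym e_conn e_reg u_eig' a_inj u_vals
    no_edge_02 C1_beta x0_C0 x2_C2).
- exact: (layer_fibre e_sym e_conn e_reg u_eig' a_inj u_vals no_edge_02 C1_beta
    x0_C0).
- exact: (covering_radius_fibre e_sym e_conn e_reg u_eig' a_inj u_vals
    no_edge_02 C1_beta x0_C0 x2_C2).
Qed.
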